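(* For every positive integer $t$ and every finite graph $G$ admitting a vertex cover of size at most $t$, the hypergraph of balls in $G$ has a proper sample compression scheme of size $t+4$.
   Context: A vertex cover of $G$ is a set $R\subseteq V(G)$ meeting every edge. A hypergraph $H$ is a pair $(V(H),E(H))$ with $V(H)$ finite and $E(H)\subseteq 2^{V(H)}$. A sample of $H$ is a pair $(X^+,X^-)$ of subsets of $V(H)$ such that some $e\in E(H)$ has $X^+\subseteq e$, $X^-\cap e=\emptyset$; $\mathcal{S}(H)$ is the set of samples. $S$ realizes $(X^+,X^-)$ if $X^+\subseteq S$, $S\cap X^-=\emptyset$. A subsample of $(X^+,X^-)$ is a sample $(Y^+,Y^-)$ with $Y^\pm\subseteq X^\pm$, of size $|Y^+\cup Y^-|$. A sample compression scheme is a pair $(\kappa,\rho)$ with $\kappa:\mathcal{S}(H)\to\mathcal{S}(H)\times\{0,1\}^*$, $\rho:\mathcal{S}(H)\times\{0,1\}^*\to 2^{V(H)}$, such that for every sample the first component of $\kappa(X^+,X^-)$ is a subsample of it and $\rho(\kappa(X^+,X^-))$ realizes it; its size is $k_1+k_2$ with $k_1$ the maximum size of the subsample and $k_2$ the maximum bitstring length output by $\kappa$; it is proper if every value of $\rho$ is a hyperedge. The hypergraph of balls in $G$ has vertex set $V(G)$ and hyperedges all $B_G(c,r)=\{v:\mathrm{dist}_G(c,v)\le r\}$ for $c\in V(G)$, $r$ an integer. *)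

From mathcomp Require Import all_boot all_order all_algebra.
Set Implicit Arguments. Unset Strict Implicit. Unset Printing Implicit Defensive.

Definition simple_graph (T : finType) (e : rel T) : Prop :=
  symmetric e /\ irreflexive e.

Definition vertex_cover (T : finType) (e : rel T) (R : {set T}) : Prop :=
  forall x y, e x y -> (x \in R) || (y \in R).

(* dist_G(c,v) <= r  iff there is a walk c = v0, v1, ..., vk = v with k <= r
   (dist is the length of a shortest walk, +infinity if none). *)
Definition dist_le (T : finType) (e : rel T) (c v : T) (r : int) : Prop :=
  exists p : seq T, [/\ path e c p, last c p = v & ((size p)%:Z <= r)%R].

Definition is_ball (T : finType) (e : rel T) (E : {set T}) : Prop :=
  exists (c : T) (r : int), forall v, v \in E <-> dist_le e c v r.

Definition is_sample (T : finType) (e : rel T) (X : {set T} * {set T}) : Prop :=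
  exists E : {set T}, [/\ is_ball e E, X.1 \subset E & [disjoint X.2 & E]].

Definition realizes (T : finType) (S : {set T}) (X : {set T} * {set T}) : Prop :=
  X.1 \subset S /\ [disjoint S & X.2].

Definition subsample (T : finType) (e : rel T) (Y X : {set T} * {set T}) : Prop :=
  [/\ is_sample e Y, Y.1 \subset X.1 & Y.2 \subset X.2].

Definition proper_scheme (T : finType) (e : rel T) (k : nat)
  (kappa : {set T} * {set T} -> ({set T} * {set T}) * seq bool)
  (rho : ({set T} * {set T}) * seq bool -> {set T}) : Prop :=
  exists k1 k2 : nat, [/\ (k1 + k2 <= k)%N,
    (forall X, is_sample e X ->
       [/\ subsample e (kappa X).1 X,
           (#|(kappa X).1.1 :|: (kappa X).1.2| <= k1)%N,
           (size (kappa X).2 <= k2)%N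
         & realizes (rho (kappa X)) X])
  & (forall Y b, is_sample e Y -> is_ball e (rho (Y, b)))].

(* Shrink a realizing ball B(c, r) until some positive point p lies at distance
   exactly r from c.  If c lies in the vertex cover R, transmit p and the
   indicator vector of {c} on R.  Otherwise N(c) is contained in R; transmit the
   indicator vector of N(c).  The vertices whose neighbourhood is N(c) (the
   twins of c) all have the same balls of radius at least 2, so for r >= 2 any
   twin together with p determines the ball.  For r <= 1 and c positive,
   transmit c and one bit for r.  For r = 1 and c not positive, the unit ball
   around any twin of c outside X- realizes the sample; one negative point (the
   negative twin of largest rank below c) steers the decoder to such a twin.
   Three tag bits tell the cases apart: one point and |R| + 3 bits in all. *)

From mathcomp Require Import all_boot all_order all_algebra.
From Stdlib Require Import ClassicalEpsilon.

Set Implicit Arguments. Unset Strict Implicit. Unset Printing Implicit Defensive.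

Definition asbool (P : Prop) : bool :=
  if excluded_middle_informative P then true else false.

Lemma asboolP (P : Prop) : reflect P (asbool P).
Proof. by rewrite /asbool; case: excluded_middle_informative => HP; constructor. Qed.

Section Balls.
Variables (T : finType) (e : rel T).

Lemma dist_le_mono c v (k k' : nat) :
  dist_le e c v k -> k <= k' -> dist_le e c v k'.
Proof.
move=> [q [qpath qlast qsize]] le_kk'; exists q.
by split; rewrite // lez_nat (leq_trans _ le_kk').
Qed.

Lemma dist_le_refl c (k : nat) : dist_le e c c k.
Proof. by exists [::]. Qed.

Lemma dist_le0 c v : dist_le e c v 0 -> v = c.
Proof. by case=> [[|x q] [_ <- //]]. Qed.

Lemma dist_le_edge c v : e c v -> dist_le e c v 1.
Proof. by move=> ecv; exists [:: v]; rewrite /= ecv. Qed.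

Lemma dist_le1 c v : dist_le e c v 1 -> v = c \/ e c v.
Proof.
case=> [[|x [|y q]] [/= qpath <- qsize]]; first by left.
  by right; case/andP: qpath.
by rewrite lez_nat in qsize.
Qed.

Lemma dist_le_nbhd c v (k : nat) : dist_le e c v k -> v <> c -> exists u, e c u.
Proof. by case=> [[|x q] [/= qpath <- _]] // _; exists x; case/andP: qpath. Qed.

Definition ball c (k : nat) : {set T} := [set v | asbool (dist_le e c v k)].

Lemma ballP c (k : nat) v : reflect (dist_le e c v k) (v \in ball c k).
Proof. by rewrite inE; apply: asboolP. Qed.

Lemma is_ball_ball c (k : nat) : is_ball e (ball c k).
Proof. by exists c, k => v; split=> /ballP. Qed.

Lemma is_ball_set0 (c : T) : is_ball e set0.
Proof. by exists c, (-1)%R => v; rewrite inE; split=> // [[q [_ _]]]. Qed.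

Definition least_radius (lo : nat) (c v : T) : nat :=
  if excluded_middle_informative
       (exists k, (lo <= k) && asbool (dist_le e c v k)) is left ex_k
  then ex_minn ex_k else 0.

Lemma least_radiusP lo c v (k : nat) : lo <= k -> dist_le e c v k ->
  [/\ lo <= least_radius lo c v, dist_le e c v (least_radius lo c v)
    & forall k', lo <= k' -> dist_le e c v k' -> least_radius lo c v <= k'].
Proof.
move=> lo_k cv_k; rewrite /least_radius.
case: excluded_middle_informative => [ex_k|]; last first.
  by case; exists k; rewrite lo_k; apply/asboolP.
case: ex_minnP => m /andP[lo_m /asboolP cv_m] min_m; split=> // k' lo_k' cv_k'.
by apply: min_m; rewrite lo_k'; apply/asboolP.
Qed.

Lemma least_radiusE lo c v (r : nat) : lo <= r -> dist_le e c v r ->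
  (forall k, lo <= k -> dist_le e c v k -> r <= k) -> least_radius lo c v = r.
Proof.
move=> lo_r cv_r min_r; have [lo_m cv_m min_m] := least_radiusP lo_r cv_r.
by apply/eqP; rewrite eqn_leq min_m // min_r.
Qed.

Definition nbhd c : {set T} := [set u | e c u].

Definition with_nbhd (S : {set T}) : {set T} := [set v | nbhd v == S].

Lemma nbhdE c c' u : nbhd c = nbhd c' -> e c u = e c' u.
Proof. by move/setP/(_ u); rewrite !inE. Qed.

Hypothesis e_sym : symmetric e.

Lemma dist_le_twinW c c' v (k : nat) : nbhd c = nbhd c' -> (exists u, e c u) ->
  1 < k -> dist_le e c v k -> dist_le e c' v k.
Proof.
move=> cc' [u ecu] lt1k [[|x q] [qpath qlast qsize]].
  exists [:: u; c]; split=> //=; rewrite -(nbhdE u cc') ecu.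
  by rewrite e_sym ecu.
by exists (x :: q); split=> //=; rewrite -(nbhdE x cc').
Qed.

Lemma dist_le_twin c c' v (k : nat) : nbhd c = nbhd c' -> (exists u, e c u) ->
  1 < k -> dist_le e c v k <-> dist_le e c' v k.
Proof.
move=> cc' [u ecu] lt1k; split; apply: dist_le_twinW => //; first by exists u.
by exists u; rewrite -(nbhdE u cc').
Qed.

End Balls.

Section Ranks.
Variable T : finType.

Definition rk (v : T) : nat := enum_rank v.

Lemma rk_inj : injective rk.
Proof. by move=> x y /val_inj/enum_rank_inj. Qed.

Definition above (W : {set T}) (v : T) : bool := [forall w in W, rk w < rk v].

Definition first_above (A W : {set T}) : option T :=
  [pick v in A | above W v && [forall u in A, above W u ==> (rk v <= rk u)]].

Lemma first_aboveP (A W : {set T}) x : x \in A -> above W x ->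
  exists2 v, first_above A W = Some v & [/\ v \in A, above W v & rk v <= rk x].
Proof.
move=> xA xW; rewrite /first_above.
case: pickP => [v /andP[vA /andP[vW /forall_inP v_min]] | none].
  by exists v => //; split=> //; apply: (implyP (v_min x xA)).
have [|m /andP[mA mW] m_min] := @arg_minnP _ x (fun v => (v \in A) && above W v) rk.
  by rewrite xA.
have /negP[] := none m; rewrite mA mW /=.
by apply/forall_inP => u uA; apply/implyP => uW; apply: m_min; rewrite uA.
Qed.

(* The witness is the point of [A :&: B] of largest rank below [c], if any. *)
Lemma first_above_avoid (A B : {set T}) c : c \in A -> c \notin B ->
  exists2 W : {set T}, W \subset B /\ #|W| <= 1 &
    exists2 v, first_above A W = Some v & v \in A :\: B.
Proof.
move=> cA cNB.
have first_ok (W : {set T}) : above W c ->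
    (forall v, v \in A -> v \in B -> rk v < rk c -> ~~ above W v) ->
  exists2 v, first_above A W = Some v & v \in A :\: B.
  move=> cW no_below; have [v fv [vA vW v_le_c]] := first_aboveP cA cW.
  exists v; rewrite // inE vA andbT; apply/negP => vB.
  have v_lt_c : rk v < rk c.
    by rewrite ltn_neqAle v_le_c andbT; apply: contraNneq cNB => /rk_inj <-.
  by move/negP: (no_below v vA vB v_lt_c).
have [/existsP [w0 /and3P[w0A w0B w0c]] | no_w] :=
  boolP [exists w, [&& w \in A, w \in B & rk w < rk c]]; last first.
  exists set0; first by rewrite sub0set cards0.
  apply: first_ok => [|v vA vB v_lt_c]; first by apply/forall_inP => w; rewrite inE.
  by case/existsP: no_w; exists v; rewrite vA vB.
have [|wm /and3P[wmA wmB wm_c] wm_max] :=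
  @arg_maxnP _ w0 (fun w => [&& w \in A, w \in B & rk w < rk c]) rk.
  by rewrite w0A w0B.
exists [set wm]; first by rewrite sub1set wmB cards1.
apply: first_ok => [|v vA vB v_lt_c]; first by apply/forall_inP => w /set1P ->.
have v_le_wm : rk v <= rk wm by apply: wm_max; rewrite vA vB.
by apply/forall_inP => /(_ wm (set11 wm)); rewrite ltnNge v_le_wm.
Qed.

End Ranks.

Section Coding.
Variables (T : finType) (R : {set T}).

Definition code_of (A : {set T}) : seq bool := [seq u \in A | u <- enum R].

Definition set_of_code (b : seq bool) : {set T} :=
  [set u in R | nth false b (index u (enum R))].

Lemma size_code_of (A : {set T}) : size (code_of A) = #|R|.
Proof. by rewrite size_map cardE. Qed.

Lemma code_ofK (A : {set T}) : A \subset R -> set_of_code (code_of A) = A.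
Proof.
move=> AR; apply/setP => u; rewrite inE; have [uR | uNR] := boolP (u \in R).
  by rewrite (nth_map u) ?nth_index ?index_mem ?mem_enum.
by apply/esym/negP => /(subsetP AR); apply/negP.
Qed.

End Coding.

Lemma realizesP (T : finType) (S : {set T}) (X : {set T} * {set T}) :
  realizes S X <-> {subset X.1 <= S} /\ {in S, forall v, v \notin X.2}.
Proof.
rewrite /realizes disjoint_subset; split=> -[X1S SX2]; split.
- exact/subsetP.
- by move=> v /(subsetP SX2); rewrite inE.
- exact/subsetP.
- by apply/subsetP => v /SX2; rewrite inE.
Qed.

Lemma subsample_of_sample (T : finType) (e : rel T) (Y X : {set T} * {set T}) :
  is_sample e X -> Y.1 \subset X.1 -> Y.2 \subset X.2 -> subsample e Y X.
Proof.
move=> [E [ballE X1E X2E]] Y1X1 Y2X2; split=> //; exists E; split=> //.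
  exact: subset_trans Y1X1 X1E.
exact: disjointWl Y2X2 X2E.
Qed.

Lemma realizes_ball1_twin (T : finType) (e : rel T) (X : {set T} * {set T}) c c' :
  nbhd e c' = nbhd e c -> c \notin X.1 -> c' \notin X.2 ->
  realizes (ball e c 1) X -> realizes (ball e c' 1) X.
Proof.
move=> c'c cNX1 c'NX2 /realizesP [X1c X2c]; apply/realizesP; split.
- move=> x xX; have /ballP/dist_le1 [xc | ecx] := X1c x xX.
    by rewrite -xc xX in cNX1.
  by apply/ballP/dist_le_edge; rewrite (nbhdE x c'c).
- move=> v /ballP/dist_le1 [-> // | ec'v]; apply: X2c; apply/ballP/dist_le_edge.
  by rewrite -(nbhdE v c'c).
Qed.

Section Compression.
Variables (T : finType) (e : rel T) (R : {set T}).

Definition decode (Yb : ({set T} * {set T}) * seq bool) : {set T} :=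
  let: ((Yp, Ym), b) := Yb in
  match b, [pick p in Yp] with
  | [:: false, false, true & code], Some p =>
      if [pick c in set_of_code R code] is Some c
      then ball e c (least_radius e 0 c p) else set0
  | [:: false, true, b1 & _], Some p => ball e p b1
  | [:: true, false, false & code], Some p =>
      if [pick c in with_nbhd e (set_of_code R code)] is Some c
      then ball e c (least_radius e 2 c p) else set0
  | [:: true, true, _ & code], _ =>
      if first_above (with_nbhd e (set_of_code R code)) Ym is Some c
      then ball e c 1 else set0
  | _, _ => set0
  end.

Lemma is_ball_decode Yb (c0 : T) : is_ball e (decode Yb).
Proof.
case: Yb => [[Yp Ym] b]; rewrite /decode.
repeat match goal with |- context[match ?x with _ => _ end] => destruct x end;
  by [apply: is_ball_ball | apply: is_ball_set0].
Qed.

Definition compresses (X : {set T} * {set T}) (Yb : ({set T} * {set T}) * seq bool) :=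
  [/\ subsample e Yb.1 X, #|Yb.1.1 :|: Yb.1.2| <= 1, size Yb.2 <= #|R| + 3
    & realizes (decode Yb) X].

Definition tight (X : {set T} * {set T}) (c p : T) (r : nat) :=
  [/\ p \in X.1, realizes (ball e c r) X, dist_le e c p r
    & forall k : nat, dist_le e c p k -> r <= k].

(* The new radius is the largest distance from [c] to a positive point. *)
Lemma sample_tight X x0 : is_sample e X -> x0 \in X.1 ->
  exists c p r, tight X c p r.
Proof.
move=> [E [[c [r ballE]] X1E X2E]] x0X.
have [n r_eq] : exists n, r = Posz n.
  case: r ballE => [n|n] ballE; first by exists n.
  by have /ballE [q [_ _]] := subsetP X1E x0 x0X.
have X1_n x : x \in X.1 -> dist_le e c x n.
  by move=> xX; rewrite -r_eq; apply/ballE/(subsetP X1E).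
pose d := least_radius e 0 c.
have [|p /= pX p_max] := @arg_maxnP _ x0 (mem X.1) d; first exact: x0X.
have [_ cp_d d_min] := least_radiusP (leq0n n) (X1_n p pX).
exists c, p, (d p); split=> //; last by move=> k; apply: d_min.
apply/realizesP; split=> [x xX | v /ballP cv].
  have [_ cx_d _] := least_radiusP (leq0n n) (X1_n x xX).
  by apply/ballP; apply: (dist_le_mono cx_d (p_max x xX)).
have /ballE vE : dist_le e c v r.
  by rewrite r_eq; apply: (dist_le_mono cv (d_min n (leq0n n) (X1_n p pX))).
by rewrite (disjointFl X2E vE).
Qed.

Section Cases.
Variables (X : {set T} * {set T}) (c p : T) (r : nat).
Hypotheses (X_sample : is_sample e X) (X_tight : tight X c p r).

Lemma compress_center_in_cover : c \in R ->
  compresses X (([set p], set0), [:: false, false, true & code_of R [set c]]).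
Proof.
move=> cR; have [pX realX cp_r r_min] := X_tight.
split=> /=.
- by apply: subsample_of_sample; rewrite ?sub1set ?sub0set.
- by rewrite setU0 cards1.
- by rewrite size_code_of addn3.
rewrite pick_set1 code_ofK ?sub1set // pick_set1.
by rewrite (least_radiusE (r := r)) // => k _; apply: r_min.
Qed.

Lemma compress_center_positive : c \in X.1 -> r <= 1 ->
  compresses X (([set c], set0), [:: false; true; r == 1]).
Proof.
move=> cX r_le1; have [pX realX _ _] := X_tight.
split=> /=.
- by apply: subsample_of_sample; rewrite ?sub1set ?sub0set.
- by rewrite setU0 cards1.
- by rewrite addn3.
by rewrite pick_set1; case: r r_le1 realX => [|[|]].
Qed.

Hypotheses (e_sym : symmetric e) (R_cover : vertex_cover e R) (cNR : c \notin R).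

Lemma nbhd_sub_cover : nbhd e c \subset R.
Proof. by apply/subsetP => u; rewrite inE => /R_cover; rewrite (negbTE cNR). Qed.

Lemma compress_far_twin : 1 < r ->
  compresses X (([set p], set0), [:: true, false, false & code_of R (nbhd e c)]).
Proof.
move=> lt1r; have [pX realX cp_r r_min] := X_tight.
split=> /=.
- by apply: subsample_of_sample; rewrite ?sub1set ?sub0set.
- by rewrite setU0 cards1.
- by rewrite size_code_of addn3.
rewrite pick_set1 code_ofK ?nbhd_sub_cover //.
case: pickP => [c' | /(_ c)]; last by rewrite inE eqxx.
rewrite inE => /eqP/esym cc'.
have c_nbhd : exists u, e c u.
  apply: (dist_le_nbhd cp_r) => pc; have := r_min 0; rewrite pc leqn0.
  by move=> /(_ (dist_le_refl e c 0)) /eqP r0; rewrite r0 in lt1r.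
have twin k v : 1 < k -> dist_le e c v k <-> dist_le e c' v k.
  by move=> lt1k; apply: dist_le_twin.
rewrite (least_radiusE (r := r)) //; last 2 first.
- by apply/twin.
- by move=> k lt1k /twin-/(_ lt1k)/r_min.
have /realizesP [X1c X2c] := realX; apply/realizesP; split.
- by move=> x /X1c/ballP/twin-/(_ lt1r) cx; apply/ballP.
- by move=> v /ballP/twin-/(_ lt1r) cv; apply: X2c; apply/ballP.
Qed.

Lemma compress_near_twin : c \notin X.1 -> r = 1 ->
  exists Ym, compresses X ((set0, Ym), [:: true, true, false & code_of R (nbhd e c)]).
Proof.
move=> cNX1 r1; have [_ realX _ _] := X_tight; rewrite r1 in realX.
have cNX2 : c \notin X.2 by have /realizesP [_] := realX; apply; apply/ballP/dist_le_refl.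
have cA : c \in with_nbhd e (nbhd e c) by rewrite inE.
have [W [WX2 W1] [c' fc' /setDP [c'A c'NX2]]] := first_above_avoid cA cNX2.
exists W; split=> /=.
- by apply: subsample_of_sample; rewrite ?sub0set.
- by rewrite set0U.
- by rewrite size_code_of addn3.
rewrite code_ofK ?nbhd_sub_cover // fc'.
by apply: (realizes_ball1_twin _ cNX1 c'NX2 realX); apply/eqP; rewrite inE in c'A.
Qed.

End Cases.

Lemma compress_sample X : symmetric e -> vertex_cover e R -> is_sample e X ->
  exists Yb, compresses X Yb.
Proof.
move=> e_sym R_cover X_sample.
have [X10 | [x0 x0X]] := set_0Vmem X.1.
  exists ((set0, set0), [::]); split=> //=.
  - by apply: subsample_of_sample; rewrite ?sub0set.
  - by rewrite setU0 cards0.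
  - by apply/realizesP; rewrite X10; split=> // v; rewrite inE.
have [c [p [r X_tight]]] := sample_tight X_sample x0X.
have [cR | cNR] := boolP (c \in R).
  by eexists; apply: (compress_center_in_cover X_sample X_tight cR).
case: r X_tight => [|[|r]] X_tight.
- have [pX _ cp0 _] := X_tight.
  eexists; apply: (compress_center_positive X_sample X_tight) => //.
  by rewrite -(dist_le0 cp0).
- have [cX | cNX] := boolP (c \in X.1).
    by eexists; apply: (compress_center_positive X_sample X_tight).
  have [Ym XYm] := compress_near_twin X_sample X_tight R_cover cNR cNX erefl.
  by eexists; exact: XYm.
- by eexists; apply: (compress_far_twin X_sample X_tight e_sym R_cover cNR).
Qed.

End Compression.

Theorem theorem1p3 (t : nat) (T : finType) (e : rel T) :
  (0 < t)%N -> simple_graph e ->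
  (exists R : {set T}, vertex_cover e R /\ (#|R| <= t)%N) ->
  exists kappa rho, proper_scheme e (t + 4) kappa rho.
Proof.
move=> _ [e_sym _] [R [R_cover R_t]].
have [kappa kappaP] : exists kappa, forall X, is_sample e X -> compresses e R X (kappa X).
  apply: (choice (fun X Yb => is_sample e X -> compresses e R X Yb)) => X.
  case: (excluded_middle_informative (is_sample e X)) => [X_sample | not_sample].
    by have [Yb XYb] := compress_sample e_sym R_cover X_sample; exists Yb.
  by exists ((set0, set0), [::]) => /not_sample.
exists kappa, (decode e R), 1, (t + 3); split.
- by rewrite add1n addn3 addn4.
- move=> X /kappaP [Xsub Xcard Xsize Xreal]; split=> //.
  by apply: leq_trans Xsize _; rewrite leq_add2r.
- by move=> Y b [_ [[c _] _ _]]; apply: is_ball_decode.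
Qed.
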